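(* Let $\mathbb{U},B\in\mathbb{R}^{n\times n}$ and consider the bilinear system $z_{t+1}=\mathbb{U}z_t+u_tBz_t$, $z_t\in\mathbb{R}^n$, $u_t\in\mathbb{R}$. Let $Q=Q^\top\succ0$ in $\mathbb{R}^{n\times n}$ and $y\in\mathbb{R}^n$ be such that, for some real number $\varepsilon\neq0$, the matrix inequality \[ \begin{pmatrix} -Q & 0 & y & Q\mathbb{U}^\top\\ 0 & -\varepsilon Q & 0 & QB^\top\\ y^\top & 0 & -\frac{1}{\varepsilon} & 0\\ \mathbb{U}Q & BQ & 0 & -Q \end{pmatrix}\prec 0 \] holds. Then the linear state feedback $u_t=k^\top z_t$ with gain $k=Q^{-1}y$ stabilizes the bilinear system inside the ellipsoid $\mathscr{E}=\{z\in\mathbb{R}^n: z^\top Q^{-1}z\le1\}$, and the quadratic form $V(z)=z^\top Q^{-1}z$ is a control Lyapunov function for the bilinear system.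
   Context: $\prec0$ denotes negative definiteness of a symmetric matrix. A discrete-time control Lyapunov function is a radially unbounded positive definite function $V$ with $V(0)=0$, $V(z)>0$ for $z\ne0$, such that for every state $z_t$ there exists an input $u_t$ with $V(z_{t+1})-V(z_t)<0$. ''Stabilizes inside $\mathscr{E}$'' means that along the closed-loop system $z_{t+1}=\mathbb{U}z_t+(k^\top z_t)Bz_t$ the quantity $V$ strictly decreases for nonzero states in $\mathscr{E}$. *)

From mathcomp Require Import all_boot all_order all_algebra.
From mathcomp Require Import reals.
Set Implicit Arguments. Unset Strict Implicit. Unset Printing Implicit Defensive.
Import Order.TTheory GRing.Theory Num.Theory.
Local Open Scope ring_scope.

Section Defs.
Variable R : realType.

Definition posdef m (M : 'M[R]_m) : Prop :=
  M^T = M /\ forall x : 'cV[R]_m, x != 0 -> 0 < (x^T *m M *m x) 0 0.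
Definition negdef m (M : 'M[R]_m) : Prop :=
  M^T = M /\ forall x : 'cV[R]_m, x != 0 -> (x^T *m M *m x) 0 0 < 0.

Definition lmi_mx n (U B Q : 'M[R]_n) (y : 'cV[R]_n) (eps : R)
  : 'M[R]_(n + (n + (1 + n))) :=
  col_mx (row_mx (- Q) (row_mx 0 (row_mx y (Q *m U^T))))
 (col_mx (row_mx 0 (row_mx (- (eps *: Q)) (row_mx 0 (Q *m B^T))))
 (col_mx (row_mx y^T (row_mx 0 (row_mx ((- eps^-1)%:M : 'M[R]_1) 0)))
         (row_mx (U *m Q) (row_mx (B *m Q) (row_mx 0 (- Q)))))).

Definition bilin n (U B : 'M[R]_n) (z : 'cV[R]_n) (u : R) : 'cV[R]_n :=
  U *m z + u *: (B *m z).

Definition quadV n (P : 'M[R]_n) (z : 'cV[R]_n) : R := (z^T *m P *m z) 0 0.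

Definition sqnorm n (z : 'cV[R]_n) : R := (z^T *m z) 0 0.

Definition is_clf n (F : 'cV[R]_n -> R -> 'cV[R]_n) (V : 'cV[R]_n -> R) : Prop :=
  [/\ V 0 = 0,
      (forall z, z != 0 -> 0 < V z),
      (forall M : R, exists r : R, forall z, r <= sqnorm z -> M <= V z) &
      (forall z, z != 0 -> exists u : R, V (F z u) - V z < 0)].
End Defs.

From mathcomp Require Import all_boot all_order all_algebra.
From mathcomp Require Import reals ring lra.
Set Implicit Arguments. Unset Strict Implicit. Unset Printing Implicit Defensive.
Import Order.TTheory GRing.Theory Num.Theory.
Local Open Scope ring_scope.

(* Write P := Q^-1 and V z := z^T P z.  Testing the LMI on the block vector
   (P z, P w, c, P (U z + B w)) and simplifying with Q P = 1 gives, for z != 0,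
     V (U z + B w) - V z - eps V w + 2 c (k^T z) - c^2 / eps < 0,
   while testing it on (0, 0, 1, 0) gives eps > 0.  Choosing w := s z and
   c := eps s with s := k^T z yields V z' - V z < eps s^2 (V z - 1) for the
   closed loop, which is <= 0 on the ellipsoid; choosing w := 0 and c := 0
   shows that the input u = 0 already decreases V.  V is radially unbounded
   because |z|^2 <= tr Q * V z, by Cauchy-Schwarz for the inner product of Q. *)

Section BilinearForms.
Variable R : realType.

Definition bform m n (M : 'M[R]_(m, n)) (u : 'cV[R]_m) (v : 'cV[R]_n) : R :=
  (u^T *m M *m v) 0 0.

Section Rectangular.
Variables m n : nat.
Implicit Types (M : 'M[R]_(m, n)) (u : 'cV[R]_m) (v : 'cV[R]_n).

Lemma bform_tr M u v : bform M u v = bform M^T v u.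
Proof.
have tr11 (a : 'M[R]_1) : a^T 0 0 = a 0 0 by rewrite mxE.
by rewrite /bform -tr11 !trmx_mul trmxK mulmxA.
Qed.

Lemma bform0m u v : bform 0 u v = 0.
Proof. by rewrite /bform mulmx0 mul0mx mxE. Qed.

Lemma bformNm M u v : bform (- M) u v = - bform M u v.
Proof. by rewrite /bform mulmxN mulNmx mxE. Qed.

Lemma bformZm a M u v : bform (a *: M) u v = a * bform M u v.
Proof. by rewrite /bform -scalemxAr -scalemxAl mxE. Qed.

Lemma bform0l M v : bform M 0 v = 0.
Proof. by rewrite /bform trmx0 !mul0mx mxE. Qed.

Lemma bform0r M u : bform M u 0 = 0.
Proof. by rewrite /bform mulmx0 mxE. Qed.

Lemma bformDl M u1 u2 v : bform M (u1 + u2) v = bform M u1 v + bform M u2 v.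
Proof. by rewrite /bform linearD /= !mulmxDl mxE. Qed.

Lemma bformDr M u v1 v2 : bform M u (v1 + v2) = bform M u v1 + bform M u v2.
Proof. by rewrite /bform mulmxDr mxE. Qed.

Lemma bformZl a M u v : bform M (a *: u) v = a * bform M u v.
Proof. by rewrite /bform linearZ /= -!scalemxAl mxE. Qed.

Lemma bformZr a M u v : bform M u (a *: v) = a * bform M u v.
Proof. by rewrite /bform -scalemxAr mxE. Qed.

Lemma bformMl p (A : 'M[R]_(p, m)) M (u : 'cV[R]_p) v :
  bform (A *m M) u v = bform M (A^T *m u) v.
Proof. by rewrite /bform trmx_mul trmxK !mulmxA. Qed.

Lemma bformMr p M (A : 'M[R]_(n, p)) u (v : 'cV[R]_p) :
  bform (M *m A) u v = bform M u (A *m v).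
Proof. by rewrite /bform !mulmxA. Qed.

Lemma bform_scalarl (M : 'M[R]_(1, n)) c v : bform M c%:M v = c * (M *m v) 0 0.
Proof. by rewrite /bform tr_scalar_mx mul_scalar_mx -scalemxAl mxE. Qed.

End Rectangular.

Lemma bform_col_mx m1 m2 n (M1 : 'M[R]_(m1, n)) (M2 : 'M[R]_(m2, n)) u1 u2 v :
  bform (col_mx M1 M2) (col_mx u1 u2) v = bform M1 u1 v + bform M2 u2 v.
Proof. by rewrite /bform tr_col_mx mul_row_col mulmxDl mxE. Qed.

Lemma bform_row_mx m n1 n2 (M1 : 'M[R]_(m, n1)) (M2 : 'M[R]_(m, n2)) u v1 v2 :
  bform (row_mx M1 M2) u (col_mx v1 v2) = bform M1 u v1 + bform M2 u v2.
Proof. by rewrite /bform mul_mx_row mul_row_col mxE. Qed.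

Section Square.
Variable n : nat.
Implicit Types (M A : 'M[R]_n) (u v w : 'cV[R]_n).

Lemma quadVE M v : quadV M v = bform M v v. Proof. by []. Qed.

Lemma bform_sym M u v : M^T = M -> bform M u v = bform M v u.
Proof. by move=> MT; rewrite bform_tr MT. Qed.

Lemma bform_delta M i w : bform M (delta_mx i 0) w = (M *m w) i 0.
Proof. by rewrite /bform trmx_delta -rowE -row_mul mxE. Qed.

Lemma sqnormE w : sqnorm w = \sum_i w i 0 ^+ 2.
Proof. by rewrite /sqnorm mxE; apply: eq_bigr => i _; rewrite mxE expr2. Qed.

Lemma posdef_ge0 M : posdef M -> forall v, 0 <= bform M v v.
Proof.
move=> [_ Mpos] v; have [->|v0] := eqVneq v 0; last exact/ltW/Mpos.
by rewrite /bform mulmx0 mxE.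
Qed.

Lemma posdef_unitmx M : posdef M -> M \in unitmx.
Proof.
move=> [_ Mpos]; rewrite unitmxE unitfE; apply/negP => /det0P [v v0 vM].
have := Mpos v^T; rewrite trmxK trmx_eq0 v0 => /(_ isT).
by rewrite vM mul0mx mxE ltxx.
Qed.

Lemma bform_congr_invmx M A u v : M^T = M -> M \in unitmx ->
  bform (A *m M) (invmx M *m u) (invmx M *m v) = bform (invmx M) u (A *m v).
Proof.
move=> MT Mu; have PT : (invmx M)^T = invmx M by rewrite trmx_inv MT.
by rewrite -[LHS]bformMr mulmxK // -{1}PT -bformMl bformMr.
Qed.

Lemma bform_invmx M u v : M^T = M -> M \in unitmx ->
  bform M (invmx M *m u) (invmx M *m v) = bform (invmx M) u v.
Proof. by move=> MT Mu; rewrite -{1}(mul1mx M) bform_congr_invmx // mul1mx. Qed.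

Lemma posdef_invmx M : posdef M -> posdef (invmx M).
Proof.
move=> Mpd; have [MT Mpos] := Mpd; have Mu := posdef_unitmx Mpd.
split=> [|x x0]; first by rewrite trmx_inv MT.
rewrite -/(bform _ x x) -bform_invmx //; apply: Mpos.
by apply: contraNneq x0 => Px0; rewrite -[x](mulKVmx Mu) Px0 mulmx0.
Qed.

Lemma bform_CauchySchwarz M u v : posdef M ->
  bform M u v ^+ 2 <= bform M u u * bform M v v.
Proof.
move=> Mpd; have [MT Mpos] := Mpd.
have := posdef_ge0 Mpd (bform M v v *: u - bform M u v *: v).
rewrite -scaleNr !(bformDl, bformDr, bformZl, bformZr) (bform_sym v u MT).
have [v0|v0] := eqVneq v 0.
  by move=> _; rewrite v0 /bform !mulmx0 mxE expr0n /= mulr0.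
have := Mpos v v0; rewrite -/(bform _ v v); nra.
Qed.

Lemma sqnorm_le_trace M w : posdef M -> sqnorm (M *m w) <= \tr M * bform M w w.
Proof.
move=> Mpd; rewrite sqnormE /mxtrace mulr_suml; apply: ler_sum => i _.
have -> : M i i = bform M (delta_mx i 0) (delta_mx i 0).
  by rewrite bform_delta -colE mxE.
by rewrite -bform_delta bform_CauchySchwarz.
Qed.

Lemma quadV_invmx_radially_unbounded M : posdef M ->
  forall c : R, exists r : R, forall z, r <= sqnorm z -> c <= quadV (invmx M) z.
Proof.
move=> Mpd c; have [MT _] := Mpd; have Mu := posdef_unitmx Mpd.
exists (`|c| * (`|\tr M| + 1)) => z le_r_z.
have V_ge0 : 0 <= quadV (invmx M) z := posdef_ge0 (posdef_invmx Mpd) z.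
have le_z_V : sqnorm z <= `|\tr M| * quadV (invmx M) z.
  rewrite quadVE -bform_invmx // -{1}[z](mulKVmx Mu).
  exact: le_trans (sqnorm_le_trace _ Mpd) (ler_wpM2r (posdef_ge0 Mpd _) (ler_norm _)).
have := ler_norm c; have := normr_ge0 c; have := normr_ge0 (\tr M); nra.
Qed.

End Square.

End BilinearForms.

Section LMI.
Variables (R : realType) (n : nat) (U B Q : 'M[R]_n) (y : 'cV[R]_n) (eps : R).
Hypothesis Qsym : Q^T = Q.

Lemma quadV_lmi_mx a b c d :
  quadV (lmi_mx U B Q y eps) (col_mx a (col_mx b (col_mx c%:M d)))
  = 2 * c * (y^T *m a) 0 0 + 2 * bform (U *m Q) d a + 2 * bform (B *m Q) d b
    - bform Q a a - eps * bform Q b b - c ^+ 2 / eps - bform Q d d.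
Proof.
rewrite quadVE /lmi_mx !(bform_col_mx, bform_row_mx) !(bform0m, bformNm, bformZm).
rewrite (bform_tr (Q *m U^T)) (bform_tr (Q *m B^T)) (bform_tr y) !trmx_mul !trmxK Qsym.
rewrite !bform_scalarl -scalar_mxM [_%:M 0 0]mxE eqxx mulr1n.
ring.
Qed.

Hypothesis Qu : Q \in unitmx.
Hypothesis Hlmi : negdef (lmi_mx U B Q y eps).
Local Notation P := (invmx Q).
Local Notation k := (invmx Q *m y).

Lemma lmi_form_lt0 a b c d : col_mx a (col_mx b (col_mx c%:M d)) != 0 ->
  2 * c * (y^T *m a) 0 0 + 2 * bform (U *m Q) d a + 2 * bform (B *m Q) d b
    - bform Q a a - eps * bform Q b b - c ^+ 2 / eps - bform Q d d < 0.
Proof. by move=> /Hlmi.2 lt0; rewrite -quadV_lmi_mx. Qed.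

Lemma lmi_eps_gt0 : 0 < eps.
Proof.
have := @lmi_form_lt0 0 0 1 0.
rewrite !col_mx_eq0 !eqxx oner_eq0 !(bform0l, bform0r) mulmx0 mxE => /(_ isT).
by rewrite -invr_gt0; lra.
Qed.

Lemma lmi_decrease z w c : z != 0 ->
  quadV P (U *m z + B *m w) - quadV P z - eps * quadV P w
    + 2 * c * (k^T *m z) 0 0 - c ^+ 2 / eps < 0.
Proof.
move=> z0; set x := U *m z + B *m w.
have xE : bform P x x = bform P x (U *m z) + bform P x (B *m w) by rewrite -bformDr.
have Pz0 : P *m z != 0.
  by apply: contraNneq z0 => Pz0; rewrite -[z](mulKVmx Qu) Pz0 mulmx0.
have := @lmi_form_lt0 (P *m z) (P *m w) c (P *m x).
rewrite !col_mx_eq0 (negPf Pz0) => /(_ isT).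
rewrite !bform_congr_invmx // !bform_invmx // trmx_mul trmx_inv Qsym mulmxA.
by rewrite !quadVE xE; lra.
Qed.

Lemma closed_loop_decrease z (s := (k^T *m z) 0 0) : z != 0 ->
  quadV P (bilin U B z s) - quadV P z < eps * s ^+ 2 * (quadV P z - 1).
Proof.
move=> z0; have := lmi_decrease (s *: z) (eps * s) z0.
rewrite -scalemxAr !quadVE bformZl bformZr.
have eps0 := lmi_eps_gt0.
rewrite (_ : (eps * s) ^+ 2 / eps = eps * s ^+ 2); last by field; rewrite gt_eqF.
rewrite -/s; lra.
Qed.

End LMI.

Theorem theorem4 (R : realType) (n : nat) (U B Q : 'M[R]_n) (y : 'cV[R]_n) (eps : R) :
  posdef Q -> eps != 0 -> negdef (lmi_mx U B Q y eps) ->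
  let k := invmx Q *m y in
  let V := quadV (invmx Q) in
  (forall z : 'cV[R]_n, z != 0 -> V z <= 1 ->
     V (bilin U B z ((k^T *m z) 0 0)) - V z < 0)
  /\ is_clf (bilin U B) V.
Proof.
move=> Qpd _ Hlmi k V; have Qsym := Qpd.1; have Qu := posdef_unitmx Qpd.
have eps0 := lmi_eps_gt0 Qsym Hlmi.
have V0 : V 0 = 0 by rewrite /V quadVE bform0l.
split=> [z z0 Vz_le1|].
  have := closed_loop_decrease Qsym Qu Hlmi z0; rewrite -/k -/V.
  have : 0 <= eps * (k^T *m z) 0 0 ^+ 2 by rewrite mulr_ge0 ?sqr_ge0 ?ltW.
  nra.
split=> [||c|z z0].
- exact: V0.
- exact: (posdef_invmx Qpd).2.
- exact: quadV_invmx_radially_unbounded.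
- exists 0; have := lmi_decrease Qsym Qu Hlmi 0 0 z0.
  by rewrite /bilin scale0r mulmx0 !addr0 -/V V0; lra.
Qed.
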